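(* A non-archimedean Polish group $G$ is extremely amenable if and only if every continuous action of $G$ on the Cantor space $D^{\aleph_0}=\{0,1\}^{\mathbb N}$ has a fixed point.
   Context: A Polish group is a separable completely metrizable topological group; it is non-archimedean if it is Hausdorff and has a neighbourhood base at the identity consisting of open subgroups. A topological group is extremely amenable if every continuous action of it on a compact Hausdorff space has a fixed point. *)

From Stdlib Require Import Reals List.
Open Scope R_scope.

Definition is_topology {X : Type} (op : (X -> Prop) -> Prop) : Prop :=
  op (fun _ => True) /\
  (forall U V, op U -> op V -> op (fun x => U x /\ V x)) /\
  (forall (I : Type) (F : I -> X -> Prop),
      (forall i, op (F i)) -> op (fun x => exists i, F i x)).

Definition continuous {X Y : Type} (opX : (X -> Prop) -> Prop)
  (opY : (Y -> Prop) -> Prop) (f : X -> Y) : Prop :=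
  forall V, opY V -> opX (fun x => V (f x)).

(* Continuity of f : X * Y -> Z for the product topology on X * Y
   (whose basic open sets are the open rectangles). *)
Definition jointly_continuous {X Y Z : Type} (opX : (X -> Prop) -> Prop)
  (opY : (Y -> Prop) -> Prop) (opZ : (Z -> Prop) -> Prop) (f : X -> Y -> Z) : Prop :=
  forall W, opZ W -> forall x y, W (f x y) ->
    exists U V, opX U /\ opY V /\ U x /\ V y /\
      (forall x' y', U x' -> V y' -> W (f x' y')).

Definition hausdorff {X : Type} (op : (X -> Prop) -> Prop) : Prop :=
  forall x y : X, x <> y -> exists U V, op U /\ op V /\ U x /\ V y /\
    (forall z, U z -> V z -> False).

Definition compact {X : Type} (op : (X -> Prop) -> Prop) : Prop :=
  forall (I : Type) (F : I -> X -> Prop),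
    (forall i, op (F i)) -> (forall x, exists i, F i x) ->
    exists l : list I, forall x, exists i, In i l /\ F i x.

Definition is_group {G : Type} (mul : G -> G -> G) (inv : G -> G) (e : G) : Prop :=
  (forall x y z, mul x (mul y z) = mul (mul x y) z) /\
  (forall x, mul e x = x) /\ (forall x, mul x e = x) /\
  (forall x, mul (inv x) x = e) /\ (forall x, mul x (inv x) = e).

Definition is_topological_group {G : Type} (mul : G -> G -> G) (inv : G -> G) (e : G)
  (op : (G -> Prop) -> Prop) : Prop :=
  is_group mul inv e /\ is_topology op /\
  jointly_continuous op op op mul /\ continuous op op inv.

Definition is_metric {X : Type} (d : X -> X -> R) : Prop :=
  (forall x y, 0 <= d x y) /\ (forall x y, d x y = 0 <-> x = y) /\
  (forall x y, d x y = d y x) /\ (forall x y z, d x z <= d x y + d y z).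

Definition metric_open {X : Type} (d : X -> X -> R) (U : X -> Prop) : Prop :=
  forall x, U x -> exists eps, 0 < eps /\ forall y, d x y < eps -> U y.

Definition metric_complete {X : Type} (d : X -> X -> R) : Prop :=
  forall u : nat -> X,
    (forall eps, 0 < eps -> exists N, forall m n, (N <= m)%nat -> (N <= n)%nat ->
        d (u m) (u n) < eps) ->
    exists l, forall eps, 0 < eps -> exists N, forall n, (N <= n)%nat -> d (u n) l < eps.

Definition separable {X : Type} (op : (X -> Prop) -> Prop) : Prop :=
  exists s : nat -> X, forall U, op U -> (exists x, U x) -> exists n, U (s n).

Definition polish {X : Type} (op : (X -> Prop) -> Prop) : Prop :=
  separable op /\
  exists d : X -> X -> R, is_metric d /\ metric_complete d /\
    (forall U, op U <-> metric_open d U).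

Definition open_subgroup {G : Type} (mul : G -> G -> G) (inv : G -> G) (e : G)
  (op : (G -> Prop) -> Prop) (H : G -> Prop) : Prop :=
  op H /\ H e /\ (forall x y, H x -> H y -> H (mul x y)) /\ (forall x, H x -> H (inv x)).

Definition non_archimedean {G : Type} (mul : G -> G -> G) (inv : G -> G) (e : G)
  (op : (G -> Prop) -> Prop) : Prop :=
  hausdorff op /\
  forall U, op U -> U e -> exists H, open_subgroup mul inv e op H /\ (forall x, H x -> U x).

Definition continuous_action {G X : Type} (mul : G -> G -> G) (e : G)
  (opG : (G -> Prop) -> Prop) (opX : (X -> Prop) -> Prop) (a : G -> X -> X) : Prop :=
  (forall x, a e x = x) /\ (forall g h x, a (mul g h) x = a g (a h x)) /\
  jointly_continuous opG opX opX a.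

Definition has_fixed_point {G X : Type} (a : G -> X -> X) : Prop :=
  exists x, forall g, a g x = x.

Definition extremely_amenable {G : Type} (mul : G -> G -> G) (e : G)
  (opG : (G -> Prop) -> Prop) : Prop :=
  forall (X : Type) (opX : (X -> Prop) -> Prop),
    is_topology opX -> compact opX -> hausdorff opX -> (exists x : X, True) ->
    forall a : G -> X -> X, continuous_action mul e opG opX a -> has_fixed_point a.

(* Cantor space {0,1}^N with the product topology of discrete {0,1}. *)
Definition cantor := nat -> bool.

Definition cantor_open (U : cantor -> Prop) : Prop :=
  forall x, U x -> exists n, forall y, (forall k, (k < n)%nat -> y k = x k) -> U y.

(* The forward implication only uses that 2^N is a nonempty compact Hausdorff
   space.  For the converse, let G act continuously and without fixed point on
   a nonempty compact Hausdorff space X; we build a fixed-point-free action on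
   2^N in three steps.
   1. Finite separating cover: each x is moved by some g_x, so by continuity and
      non-archimedeanity there are an open O_x containing x, an open subgroup H_x
      and an open U_x with H_x O_x inside U_x and U_x disjoint from g_x^-1 U_x.
      Finitely many O_1, ..., O_n cover X, and V = H_1 /\ ... /\ H_n is an open
      subgroup.
   2. Symbolic flow: as G is separable, the right cosets of V are enumerated by
      a dense sequence, and G acts by right shifts on colourings of (V\G) x n.
      The colourings psi such that every coset Vh has a j with
      psi(Vh, j) <> psi(V g_j h, j) form a closed invariant set without fixed
      point, nonempty because psi(Vh, j) = [h x0 in O_j] is one of them.
   3. Coding: for a nonempty closed Y in 2^N, the space 2^N is homeomorphic to
      Y x 2^N (interleave the free choices of a branch of Y with the bits of a
      second sequence), so a fixed-point-free action on Y yields one on 2^N. *)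

From Pilot Require Import Defs.
From Stdlib Require Import Reals List.
From Stdlib Require Import Classical ClassicalEpsilon FunctionalExtensionality PropExtensionality Lia Arith.
Local Open Scope nat_scope.

Definition truth (P : Prop) : bool := if excluded_middle_informative P then true else false.

Lemma truth_true (P : Prop) : truth P = true <-> P.
Proof. unfold truth; destruct (excluded_middle_informative P); split; intros; try tauto; discriminate. Qed.

Lemma truth_false (P : Prop) : truth P = false <-> ~ P.
Proof. unfold truth; destruct (excluded_middle_informative P); split; intros; try tauto; discriminate. Qed.

Lemma truth_iff (P Q : Prop) : (P <-> Q) -> truth P = truth Q.
Proof. intros H. assert (P = Q) by (apply propositional_extensionality; auto). subst; auto. Qed.

(* The least witness of a satisfiable predicate on nat (and 0 otherwise). *)
Lemma exists_least (P : nat -> Prop) :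
  (exists m, P m) -> exists m, P m /\ forall k, k < m -> ~ P k.
Proof.
  intros [m Hm]. revert Hm. induction m as [m IH] using lt_wf_ind. intros Hm.
  destruct (classic (exists k, k < m /\ P k)) as [[k [Hk Pk]]|Hnone].
  - exact (IH k Hk Pk).
  - exists m. split; auto. intros k Hk Pk. apply Hnone; eauto.
Qed.

Definition least (P : nat -> Prop) : nat :=
  match excluded_middle_informative (exists m, P m) with
  | left H => proj1_sig (constructive_indefinite_description _ (exists_least P H))
  | right _ => 0
  end.

Lemma least_spec (P : nat -> Prop) :
  (exists m, P m) -> P (least P) /\ forall k, k < least P -> ~ P k.
Proof.
  intros H. unfold least. destruct (excluded_middle_informative _); [|tauto].
  destruct (constructive_indefinite_description _ _). simpl. auto.
Qed.

Lemma least_ext (P Q : nat -> Prop) : (forall k, P k <-> Q k) -> least P = least Q.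
Proof.
  intros E. replace Q with P; auto.
  apply functional_extensionality; intros; apply propositional_extensionality; auto.
Qed.

(* Pairs (q, r) with r < n are coded by the natural number q * n + r. *)
Lemma pair_code_div n q r : r < n -> (q * n + r) / n = q.
Proof. intros. rewrite Nat.div_add_l by lia. rewrite Nat.div_small by lia. lia. Qed.

Lemma pair_code_mod n q r : r < n -> (q * n + r) mod n = r.
Proof.
  intros H. pose proof (Nat.div_mod_eq (q * n + r) n) as E.
  rewrite pair_code_div in E by auto. lia.
Qed.

Lemma le_list_max l x : In x l -> x <= list_max l.
Proof.
  intros H. pose proof (proj1 (list_max_le l (list_max l)) (Nat.le_refl _)) as F.
  rewrite Forall_forall in F. auto.
Qed.

Definition agree (N : nat) (f g : cantor) : Prop := forall k, k < N -> f k = g k.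

Lemma agree_weaken N M f g : M <= N -> agree N f g -> agree M f g.
Proof. intros H A k Hk. apply A. lia. Qed.

Lemma agree_sym N f g : agree N f g -> agree N g f.
Proof. intros A k Hk. symmetry. auto. Qed.

Lemma agree_trans N f g h : agree N f g -> agree N g h -> agree N f h.
Proof. intros A B k Hk. rewrite A; auto. Qed.

Lemma agree_open N w : cantor_open (agree N w).
Proof.
  intros x Hx. exists N. intros y Hy. apply agree_trans with x; auto. apply agree_sym. auto.
Qed.

Definition of_list (l : list bool) : cantor := fun k => nth k l false.

Lemma of_list_app l x k : k < length l -> of_list (l ++ x) k = of_list l k.
Proof. intros. unfold of_list. apply app_nth1; auto. Qed.

Lemma of_list_last l b : of_list (l ++ b :: nil) (length l) = b.
Proof. unfold of_list. rewrite app_nth2 by lia. rewrite Nat.sub_diag. reflexivity. Qed.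

Lemma of_list_map y n : agree n (of_list (map y (seq 0 n))) y.
Proof.
  intros k Hk. unfold of_list.
  rewrite nth_indep with (d' := y 0) by (rewrite length_map, length_seq; lia).
  rewrite map_nth, seq_nth by lia. reflexivity.
Qed.

Lemma agree_snoc l b x :
  agree (S (length l)) (of_list (l ++ b :: nil)) x <-> agree (length l) (of_list l) x /\ x (length l) = b.
Proof.
  split.
  - intros A. split.
    + intros k Hk. rewrite <- A by lia. rewrite of_list_app by lia. reflexivity.
    + rewrite <- A by lia. apply of_list_last.
  - intros [A B] k Hk. destruct (Nat.eq_dec k (length l)) as [->|Hne].
    + rewrite <- B. apply of_list_last.
    + rewrite of_list_app by lia. apply A. lia.
Qed.

Lemma cantor_topology : is_topology cantor_open.
Proof.
  split; [|split].
  - intros x _. exists 0. auto.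
  - intros U V HU HV x [Ux Vx]. destruct (HU x Ux) as [n1 H1]. destruct (HV x Vx) as [n2 H2].
    exists (Nat.max n1 n2). intros y Hy. split.
    + apply H1. intros k Hk. apply Hy. lia.
    + apply H2. intros k Hk. apply Hy. lia.
  - intros I F HF x [i Hi]. destruct (HF i x Hi) as [n Hn]. exists n. intros y Hy. exists i. auto.
Qed.

Lemma cantor_hausdorff : hausdorff cantor_open.
Proof.
  intros x y Hxy.
  assert (exists k, x k <> y k) as [k Hk].
  { apply not_all_not_ex. intros H. apply Hxy. apply functional_extensionality.
    intros k. apply NNPP. auto. }
  exists (agree (S k) x), (agree (S k) y).
  split; [apply agree_open|]. split; [apply agree_open|].
  split; [intros j _; reflexivity|]. split; [intros j _; reflexivity|].
  intros z H1 H2. apply Hk. transitivity (z k); [apply H1 | symmetry; apply H2]; lia.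
Qed.

(* Given an open cover F without finite
   subcover, follow the branch which at each step prefers the half whose basic
   clopen set is not finitely covered; no basic clopen set along this branch is
   finitely covered, yet the limit point lies in some F i, which then covers one. *)
Definition finitely_covered {I : Type} (F : I -> cantor -> Prop) (f : cantor) (n : nat) : Prop :=
  exists l : list I, forall x, agree n f x -> exists i, In i l /\ F i x.

Fixpoint uncovered_branch {I : Type} (F : I -> cantor -> Prop) (n : nat) : list bool :=
  match n with
  | 0 => nil
  | S n => let l := uncovered_branch F n in
      l ++ truth (finitely_covered F (of_list (l ++ false :: nil)) (S n)) :: nil
  end.

Lemma uncovered_branch_length {I} (F : I -> cantor -> Prop) n : length (uncovered_branch F n) = n.
Proof. induction n; simpl; auto. rewrite length_app; simpl; lia. Qed.

Lemma uncovered_branch_prefix {I} (F : I -> cantor -> Prop) m n k :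
  n <= m -> k < n -> nth k (uncovered_branch F m) false = nth k (uncovered_branch F n) false.
Proof.
  induction m; intros Hnm Hk; [lia|].
  destruct (Nat.eq_dec n (S m)) as [->|Hne]; auto.
  simpl. rewrite app_nth1 by (rewrite uncovered_branch_length; lia). apply IHm; lia.
Qed.

Lemma uncovered_branch_spec {I} (F : I -> cantor -> Prop) :
  ~ finitely_covered F (fun _ => false) 0 ->
  forall n, ~ finitely_covered F (of_list (uncovered_branch F n)) n.
Proof.
  intros H0. induction n as [|n IH].
  - intros [l Hl]. apply H0. exists l. intros x _. apply Hl. intros k Hk; lia.
  - simpl. pose proof (uncovered_branch_length F n) as Hlen.
    set (l := uncovered_branch F n) in *. rewrite <- Hlen in *.
    destruct (truth (finitely_covered F (of_list (l ++ false :: nil)) (S (length l)))) eqn:Hb.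
    + intros [l2 H2]. apply (proj1 (truth_true _)) in Hb. destruct Hb as [l1 H1].
      apply IH. exists (l1 ++ l2). intros x Hx.
      destruct (x (length l)) eqn:Hxn.
      * destruct (H2 x) as [i [Hi Fi]]; [apply agree_snoc; auto|].
        exists i. split; auto. apply in_or_app; auto.
      * destruct (H1 x) as [i [Hi Fi]]; [apply agree_snoc; auto|].
        exists i. split; auto. apply in_or_app; auto.
    + exact (proj1 (truth_false _) Hb).
Qed.

Lemma cantor_compact : Defs.compact cantor_open.
Proof.
  intros I F HF Hcov. apply NNPP. intros Hno.
  assert (Hbad : forall n, ~ finitely_covered F (of_list (uncovered_branch F n)) n).
  { apply uncovered_branch_spec. intros [l Hl]. apply Hno. exists l. intros z.
    apply Hl. intros k Hk; lia. }
  set (x := fun k => nth k (uncovered_branch F (S k)) false).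
  assert (Hx : forall n, agree n x (of_list (uncovered_branch F n))).
  { intros n k Hk. unfold x, of_list. symmetry. apply uncovered_branch_prefix; lia. }
  destruct (Hcov x) as [i Hi]. destruct (HF i x Hi) as [N HN].
  apply (Hbad N).
  exists (i :: nil). intros y Hy. exists i. split; [left; auto|].
  apply HN. apply agree_sym. apply agree_trans with (of_list (uncovered_branch F N)); auto.
Qed.

Definition cantor_closed (Y : cantor -> Prop) : Prop :=
  forall y, (forall N, exists y', Y y' /\ agree N y y') -> Y y.

Definition cantor_action_continuous {G : Type} (opG : (G -> Prop) -> Prop)
  (act : G -> cantor -> cantor) : Prop :=
  forall g y N, exists P M, opG P /\ P g /\
    forall g' y', P g' -> agree M y y' -> agree N (act g y) (act g' y').

Section Coding.

Variable Y : cantor -> Prop.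

(* The node "first n bits of f" of the tree of Y branches when both one-bit
   extensions of it are prefixes of points of Y; otherwise the next bit of any
   point of Y through this node is forced, and forced_bit computes it. *)
Definition branching (f : cantor) (n : nat) : bool :=
  truth ((exists y, Y y /\ agree n f y /\ y n = true) /\
         (exists y, Y y /\ agree n f y /\ y n = false)).

Definition forced_bit (f : cantor) (n : nat) : bool :=
  truth (exists y, Y y /\ agree n f y /\ y n = true).

Lemma branching_agree f g n : agree n f g -> branching f n = branching g n.
Proof.
  intros A. unfold branching. apply truth_iff.
  split; intros [[y1 [H1 [H2 H3]]] [y2 [H4 [H5 H6]]]]; split;
    [exists y1 | exists y2 | exists y1 | exists y2]; repeat split; auto;
    eapply agree_trans; eauto using agree_sym.
Qed.

Lemma forced_bit_agree f g n : agree n f g -> forced_bit f n = forced_bit g n.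
Proof.
  intros A. unfold forced_bit. apply truth_iff.
  split; intros [y1 [H1 [H2 H3]]]; exists y1; repeat split; auto;
    eapply agree_trans; eauto using agree_sym.
Qed.

(* Decoding w in 2^N into a point of Y and a point of 2^N.  decode_state w n is
   the pair (first n bits of the decoded branch, number of bits of w read).  At
   a branching node the next branch bit is read from w and the following bit of
   w is kept for the second component; at other nodes the branch bit is forced
   and the next bit of w goes to the second component. *)
Fixpoint decode_state (w : cantor) (n : nat) : list bool * nat :=
  match n with
  | 0 => (nil, 0)
  | S n => let r := decode_state w n in
     if branching (of_list (fst r)) n then (fst r ++ w (snd r) :: nil, snd r + 2)
     else (fst r ++ forced_bit (of_list (fst r)) n :: nil, snd r + 1)
  end.

Definition decode_branch (w : cantor) : cantor :=
  fun k => nth k (fst (decode_state w (S k))) false.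

Definition decode_rest (w : cantor) : cantor := fun k =>
  let r := decode_state w k in
  if branching (of_list (fst r)) k then w (snd r + 1) else w (snd r).

Fixpoint encode_prefix (y z : cantor) (n : nat) : list bool :=
  match n with
  | 0 => nil
  | S n => encode_prefix y z n ++ (if branching y n then y n :: z n :: nil else z n :: nil)
  end.

Definition encode (y z : cantor) : cantor := fun k => nth k (encode_prefix y z (S k)) false.

Lemma decode_state_length w n : length (fst (decode_state w n)) = n.
Proof.
  induction n; simpl; auto.
  destruct (branching _ n); simpl; rewrite length_app; simpl; lia.
Qed.

Lemma decode_state_consumed w n : n <= snd (decode_state w n) <= 2 * n.
Proof. induction n; simpl; auto. destruct (branching _ n); simpl; lia. Qed.

Lemma decode_state_prefix w m n k :
  n <= m -> k < n -> nth k (fst (decode_state w m)) false = nth k (fst (decode_state w n)) false.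
Proof.
  induction m; intros Hnm Hk; [lia|].
  destruct (Nat.eq_dec n (S m)) as [->|Hne]; auto.
  assert (Hsnoc : exists b, fst (decode_state w (S m)) = fst (decode_state w m) ++ b :: nil).
  { simpl. destruct (branching _ m); simpl; eauto. }
  destruct Hsnoc as [b ->]. rewrite app_nth1 by (rewrite decode_state_length; lia).
  apply IHm; lia.
Qed.

Lemma decode_branch_prefix w n : agree n (decode_branch w) (of_list (fst (decode_state w n))).
Proof. intros k Hk. unfold decode_branch, of_list. symmetry. apply decode_state_prefix; lia. Qed.

Lemma decode_state_in_tree w n : (exists y, Y y) ->
  exists y', Y y' /\ agree n (of_list (fst (decode_state w n))) y'.
Proof.
  intros [y0 Hy0]. induction n as [|n [y' [Hy' Ha]]].
  - exists y0; split; auto. intros k Hk; lia.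
  - pose proof (decode_state_length w n) as Hl.
    simpl. set (l := fst (decode_state w n)) in *. rewrite <- Hl in *.
    assert (Hext : forall b y'', Y y'' -> agree (length l) (of_list l) y'' -> y'' (length l) = b ->
       exists y', Y y' /\ agree (S (length l)) (of_list (l ++ b :: nil)) y').
    { intros b y'' H1 H2 H3. exists y''. split; auto. apply agree_snoc. auto. }
    destruct (branching (of_list l) (length l)) eqn:Hb.
    + destruct (proj1 (truth_true _) Hb) as [[y1 [? [? ?]]] [y2 [? [? ?]]]].
      destruct (w (snd (decode_state w (length l)))); [apply (Hext true y1) | apply (Hext false y2)]; auto.
    + destruct (forced_bit (of_list l) (length l)) eqn:Hf.
      * destruct (proj1 (truth_true _) Hf) as [y1 [? [? ?]]]. apply (Hext true y1); auto.
      * apply (Hext false y'); auto.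
        destruct (y' (length l)) eqn:E1; auto. exfalso.
        apply (proj1 (truth_false _) Hf). exists y'; auto.
Qed.

Lemma decode_branch_in w : cantor_closed Y -> (exists y, Y y) -> Y (decode_branch w).
Proof.
  intros Hcl Hne. apply Hcl. intros N.
  destruct (decode_state_in_tree w N Hne) as [y' [Hy' Ha]]. exists y'. split; auto.
  apply agree_trans with (of_list (fst (decode_state w N))); auto. apply decode_branch_prefix.
Qed.

Lemma encode_prefix_length y z n : n <= length (encode_prefix y z n).
Proof. induction n; simpl; auto. destruct (branching y n); rewrite length_app; simpl; lia. Qed.

Lemma encode_prefix_prefix y z m n k :
  n <= m -> k < length (encode_prefix y z n) ->
  nth k (encode_prefix y z m) false = nth k (encode_prefix y z n) false.
Proof.
  assert (Hmono : forall m n, n <= m -> length (encode_prefix y z n) <= length (encode_prefix y z m)).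
  { induction m0 as [|m0 IH]; intros n0 H; [replace n0 with 0 by lia; auto|].
    destruct (Nat.eq_dec n0 (S m0)) as [->|Hne]; auto.
    simpl. rewrite length_app. specialize (IH n0 ltac:(lia)). lia. }
  induction m; intros Hnm Hk; [replace n with 0 in * by lia; reflexivity|].
  destruct (Nat.eq_dec n (S m)) as [->|Hne]; auto.
  simpl. rewrite app_nth1 by (pose proof (Hmono m n ltac:(lia)); lia). apply IHm; lia.
Qed.

Lemma encode_bit y z k m :
  k < length (encode_prefix y z m) -> encode y z k = nth k (encode_prefix y z m) false.
Proof.
  intros Hk. unfold encode. destruct (le_lt_dec m (S k)).
  - apply encode_prefix_prefix; auto.
  - symmetry. apply encode_prefix_prefix; [lia|]. pose proof (encode_prefix_length y z (S k)). lia.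
Qed.

Lemma decode_state_encode y z n : Y y ->
  decode_state (encode y z) n = (map y (seq 0 n), length (encode_prefix y z n)).
Proof.
  intros Hy. induction n; auto.
  cbn [decode_state]. rewrite IHn. cbn [fst snd].
  rewrite (branching_agree _ y n (of_list_map y n)), (forced_bit_agree _ y n (of_list_map y n)).
  rewrite seq_S, map_app. cbn [map encode_prefix]. rewrite Nat.add_0_l, length_app.
  destruct (branching y n) eqn:Hb; simpl.
  - rewrite (encode_bit y z _ (S n)) by (simpl; rewrite Hb, length_app; simpl; lia).
    simpl. rewrite Hb, app_nth2, Nat.sub_diag by lia. f_equal.
  - do 3 f_equal. unfold forced_bit. destruct (y n) eqn:Hyn.
    + apply truth_true. exists y. repeat split; auto.
    + apply truth_false. intros [y1 [H1 [H2 H3]]].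
      assert (branching y n = true) by (apply truth_true; split; eauto;
        exists y; repeat split; auto).
      congruence.
Qed.

Lemma decode_encode_branch y z : Y y -> decode_branch (encode y z) = y.
Proof.
  intros Hy. apply functional_extensionality. intros k. unfold decode_branch.
  rewrite decode_state_encode by auto. apply of_list_map. lia.
Qed.

Lemma decode_encode_rest y z : Y y -> decode_rest (encode y z) = z.
Proof.
  intros Hy. apply functional_extensionality. intros k. unfold decode_rest.
  rewrite decode_state_encode by auto. cbn [fst snd].
  rewrite (branching_agree _ y k (of_list_map y k)).
  destruct (branching y k) eqn:Hb;
    (rewrite (encode_bit y z _ (S k)) by (simpl; rewrite Hb, length_app; simpl; lia));
    simpl; rewrite Hb, app_nth2 by lia.
  - replace (length (encode_prefix y z k) + 1 - length (encode_prefix y z k)) with 1 by lia. reflexivity.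
  - rewrite Nat.sub_diag. reflexivity.
Qed.

Lemma encode_prefix_decode w n :
  encode_prefix (decode_branch w) (decode_rest w) n = map w (seq 0 (snd (decode_state w n))).
Proof.
  induction n; auto.
  simpl encode_prefix. rewrite IHn.
  rewrite (branching_agree _ _ n (decode_branch_prefix w n)).
  unfold decode_rest, decode_branch. pose proof (decode_state_length w n) as Hl. simpl.
  destruct (branching (of_list (fst (decode_state w n))) n); simpl;
    rewrite seq_app, map_app; simpl.
  - rewrite app_nth2, Hl, Nat.sub_diag by lia. simpl. rewrite Nat.add_1_r. reflexivity.
  - reflexivity.
Qed.

Lemma encode_decode w : encode (decode_branch w) (decode_rest w) = w.
Proof.
  apply functional_extensionality. intros k.
  pose proof (decode_state_consumed w (S k)).
  rewrite (encode_bit _ _ k (S k)) by (rewrite encode_prefix_decode, length_map, length_seq; lia).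
  rewrite encode_prefix_decode. apply (of_list_map w _ k). lia.
Qed.

Lemma decode_state_agree w w' n : agree (2 * n) w w' -> decode_state w n = decode_state w' n.
Proof.
  induction n; intros A; auto.
  simpl. rewrite IHn by (apply agree_weaken with (2 * S n); auto; lia).
  pose proof (decode_state_consumed w' n).
  rewrite (A (snd (decode_state w' n))) by lia. reflexivity.
Qed.

Lemma decode_agree w w' n : agree (2 * n) w w' ->
  agree n (decode_branch w) (decode_branch w') /\ agree n (decode_rest w) (decode_rest w').
Proof.
  intros A. split; intros k Hk.
  - unfold decode_branch. rewrite (decode_state_agree w w' (S k)); auto.
    apply agree_weaken with (2 * n); auto; lia.
  - unfold decode_rest. rewrite (decode_state_agree w w' k) by (apply agree_weaken with (2 * n); auto; lia).
    pose proof (decode_state_consumed w' k).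
    rewrite (A (snd (decode_state w' k) + 1)), (A (snd (decode_state w' k))) by lia. reflexivity.
Qed.

Lemma encode_agree y y' z z' n : agree n y y' -> agree n z z' -> agree n (encode y z) (encode y' z').
Proof.
  assert (Hpre : forall n, agree n y y' -> agree n z z' -> encode_prefix y z n = encode_prefix y' z' n).
  { induction n0; intros A B; auto.
    simpl. rewrite IHn0 by (apply agree_weaken with (S n0); auto; lia).
    rewrite (branching_agree y y' n0) by (apply agree_weaken with (S n0); auto; lia).
    rewrite (A n0), (B n0) by lia. reflexivity. }
  intros A B k Hk. unfold encode. rewrite Hpre; auto; eapply agree_weaken; eauto.
Qed.

(* Transfer: a fixed-point-free continuous action on a nonempty closed invariant
   Y gives one on 2^N = Y x 2^N, acting on the first factor only. *)
Theorem cantor_action_from_closed_subflow (G : Type) (mul : G -> G -> G) (e : G)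
  (opG : (G -> Prop) -> Prop) (act : G -> cantor -> cantor) :
  cantor_closed Y -> (exists y, Y y) ->
  (forall g y, Y y -> Y (act g y)) ->
  (forall y, Y y -> act e y = y) ->
  (forall g h y, Y y -> act (mul g h) y = act g (act h y)) ->
  cantor_action_continuous opG act ->
  (forall y, Y y -> exists g, act g y <> y) ->
  exists a, continuous_action mul e opG cantor_open a /\ ~ has_fixed_point a.
Proof.
  intros Hcl Hne Hinv He Hm Hc Hnf.
  pose (a := fun g w => encode (act g (decode_branch w)) (decode_rest w)).
  assert (HY : forall w, Y (decode_branch w)) by (intros; apply decode_branch_in; auto).
  exists a. split; [split; [|split]|].
  - intros w. unfold a. rewrite He by auto. apply encode_decode.
  - intros g h w. unfold a. rewrite Hm by auto.
    rewrite decode_encode_branch, decode_encode_rest by auto. reflexivity.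
  - intros W HW g w HWa. destruct (HW _ HWa) as [N0 HN0].
    destruct (Hc g (decode_branch w) N0) as [P [M [HP [Pg HPM]]]].
    set (K := Nat.max M N0).
    exists P, (agree (2 * K) w).
    split; [exact HP|]. split; [apply agree_open|]. split; [exact Pg|].
    split; [intros k _; reflexivity|].
    intros g' w' Pg' Aw. apply HN0.
    destruct (decode_agree w w' K Aw) as [A1 A2].
    apply agree_sym. apply encode_agree.
    + apply HPM; auto. apply agree_weaken with K; [lia|auto].
    + apply agree_weaken with K; [lia|auto].
  - intros [w Hw]. destruct (Hnf (decode_branch w) (HY w)) as [g Hg]. apply Hg.
    rewrite <- (decode_encode_branch (act g (decode_branch w)) (decode_rest w)) by auto.
    fold (a g w). rewrite Hw. reflexivity.
Qed.

End Coding.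

Lemma open_ext {X : Type} (op : (X -> Prop) -> Prop) (U U' : X -> Prop) :
  op U -> (forall x, U x <-> U' x) -> op U'.
Proof.
  intros H E. replace U' with U; auto.
  apply functional_extensionality; intros; apply propositional_extensionality; auto.
Qed.

Lemma open_of_local {X : Type} (op : (X -> Prop) -> Prop) (S : X -> Prop) : is_topology op ->
  (forall x, S x -> exists U, op U /\ U x /\ forall y, U y -> S y) -> op S.
Proof.
  intros [_ [_ Hunion]] H.
  pose (F := fun i : {x | S x} => proj1_sig (constructive_indefinite_description _ (H _ (proj2_sig i)))).
  assert (HF : forall i, op (F i) /\ F i (proj1_sig i) /\ forall y, F i y -> S y).
  { intros i. unfold F. destruct (constructive_indefinite_description _ _). auto. }
  apply open_ext with (fun x => exists i, F i x).
  - apply Hunion. intros i. apply HF.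
  - intros x. split.
    + intros [i Hi]. apply (HF i). auto.
    + intros Sx. exists (exist _ x Sx). apply (HF (exist _ x Sx)).
Qed.

Lemma open_finite_inter {X A : Type} (op : (X -> Prop) -> Prop) (F : A -> X -> Prop) (l : list A) :
  is_topology op -> (forall i, In i l -> op (F i)) -> op (fun x => forall i, In i l -> F i x).
Proof.
  intros [Htop [Hinter _]]. induction l as [|i l IH]; intros H.
  - apply open_ext with (fun _ => True); [exact Htop|]. intros x; split; [intros _ i []|auto].
  - apply open_ext with (fun x => F i x /\ (forall j, In j l -> F j x)).
    + apply Hinter; [apply H; left; auto|]. apply IH. intros; apply H; right; auto.
    + intros x; split.
      * intros [H1 H2] j [<-|Hj]; auto.
      * intros H1; split; [apply H1; left; auto|]. intros; apply H1; right; auto.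
Qed.

Section TopologicalGroup.

Variables (G : Type) (mul : G -> G -> G) (inv : G -> G) (e : G) (opG : (G -> Prop) -> Prop).
Hypothesis HG : is_topological_group mul inv e opG.

Lemma mul_assoc x y z : mul x (mul y z) = mul (mul x y) z.
Proof. apply HG. Qed.
Lemma mul_unit_l x : mul e x = x.
Proof. apply HG. Qed.
Lemma mul_unit_r x : mul x e = x.
Proof. apply HG. Qed.
Lemma mul_inv_l x : mul (inv x) x = e.
Proof. apply HG. Qed.
Lemma mul_inv_r x : mul x (inv x) = e.
Proof. apply HG. Qed.

Lemma mul_cancel_l a x y : mul a x = mul a y -> x = y.
Proof.
  intros H. rewrite <- (mul_unit_l x), <- (mul_unit_l y), <- (mul_inv_l a), <- !mul_assoc, H.
  reflexivity.
Qed.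

Lemma inv_mul a b : inv (mul a b) = mul (inv b) (inv a).
Proof.
  apply (mul_cancel_l (mul a b)). rewrite mul_inv_r, <- mul_assoc, (mul_assoc b), mul_inv_r,
    mul_unit_l, mul_inv_r. reflexivity.
Qed.

Lemma inv_inv a : inv (inv a) = a.
Proof. apply (mul_cancel_l (inv a)). rewrite mul_inv_r, mul_inv_l. reflexivity. Qed.

(* m = v k with v = (k m^-1)^-1; for a subgroup V, v is in V once k is in V m. *)
Lemma right_quotient_decomposition k m : mul (inv (mul k (inv m))) k = m.
Proof. rewrite inv_mul, inv_inv, <- mul_assoc, mul_inv_l, mul_unit_r. reflexivity. Qed.

Lemma left_translate_open c W : opG W -> opG (fun x => W (mul c x)).
Proof.
  intros HW. apply open_of_local; [apply HG|]. intros x Hx.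
  destruct (proj1 (proj2 (proj2 HG)) W HW c x Hx) as [U [U' [_ [HU' [Uc [U'x H]]]]]].
  exists U'. split; [|split]; auto.
Qed.

Lemma right_translate_open d W : opG W -> opG (fun x => W (mul x d)).
Proof.
  intros HW. apply open_of_local; [apply HG|]. intros x Hx.
  destruct (proj1 (proj2 (proj2 HG)) W HW x d Hx) as [U [U' [HU [_ [Ux [U'd H]]]]]].
  exists U. split; [|split]; auto.
Qed.

(* The symbolic flow.  Fix an open subgroup V and a sequence s meeting every
   right coset V h; the coset V h is then indexed by the least m with s m in V h. *)
Section SymbolicFlow.

Variables (V : G -> Prop) (s : nat -> G).
Hypothesis V_open_subgroup : open_subgroup mul inv e opG V.
Hypothesis s_meets_cosets : forall h, exists m, V (mul (s m) (inv h)).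

Definition coset_index (h : G) : nat := least (fun m => V (mul (s m) (inv h))).

Lemma coset_index_spec h : V (mul (s (coset_index h)) (inv h)).
Proof. apply (least_spec _ (s_meets_cosets h)). Qed.

Lemma coset_index_eq h h' : V (mul h (inv h')) -> coset_index h = coset_index h'.
Proof.
  destruct V_open_subgroup as [_ [_ [Vmul Vinv]]]. intros Hv.
  unfold coset_index. apply least_ext. intros k. split; intros Hk.
  - replace (mul (s k) (inv h')) with (mul (mul (s k) (inv h)) (mul h (inv h'))); auto.
    rewrite <- mul_assoc, (mul_assoc (inv h)), mul_inv_l, mul_unit_l. reflexivity.
  - replace (mul (s k) (inv h)) with (mul (mul (s k) (inv h')) (inv (mul h (inv h')))); auto.
    rewrite inv_mul, inv_inv, <- mul_assoc, (mul_assoc (inv h')), mul_inv_l, mul_unit_l.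
    reflexivity.
Qed.

Lemma coset_index_translate h g : coset_index (mul (s (coset_index h)) g) = coset_index (mul h g).
Proof.
  apply coset_index_eq. rewrite inv_mul, <- mul_assoc, (mul_assoc g), mul_inv_r, mul_unit_l.
  apply coset_index_spec.
Qed.

Lemma coset_index_repr h : coset_index (s (coset_index h)) = coset_index h.
Proof.
  pose proof (coset_index_translate h e) as E. rewrite !mul_unit_r in E. exact E.
Qed.

(* Colourings of (V\G) x n are coded as points of 2^N: bit q * n + j is colour j
   of the coset of s q.  G acts by right translation of cosets. *)
Variable n : nat.
Hypothesis n_pos : 0 < n.

Definition shift (g : G) (psi : cantor) : cantor :=
  fun p => psi (coset_index (mul (s (p / n)) g) * n + p mod n).

(* psi is a genuine colouring of cosets: it only depends on coset indices. *)
Definition coset_invariant (psi : cantor) : Prop :=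
  forall p, psi p = psi (coset_index (s (p / n)) * n + p mod n).

Definition separating (gs : nat -> G) (psi : cantor) : Prop :=
  forall h, exists j, j < n /\
    psi (coset_index h * n + j) <> psi (coset_index (mul (gs j) h) * n + j).

Lemma shift_code g psi q j : j < n ->
  shift g psi (coset_index q * n + j) = psi (coset_index (mul q g) * n + j).
Proof.
  intros Hj. unfold shift. rewrite pair_code_div, pair_code_mod by auto.
  rewrite coset_index_translate. reflexivity.
Qed.

Lemma shift_mul g h psi : shift (mul g h) psi = shift g (shift h psi).
Proof.
  apply functional_extensionality. intros p. unfold shift at 2.
  rewrite shift_code by (apply Nat.mod_upper_bound; lia). unfold shift.
  rewrite mul_assoc. reflexivity.
Qed.

Lemma shift_unit psi : coset_invariant psi -> shift e psi = psi.
Proof.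
  intros HC. apply functional_extensionality. intros p.
  unfold shift. rewrite mul_unit_r. symmetry. apply HC.
Qed.

Lemma shift_coset_invariant g psi : coset_invariant (shift g psi).
Proof.
  intros p. rewrite shift_code by (apply Nat.mod_upper_bound; lia).
  reflexivity.
Qed.

Lemma shift_separating gs g psi : separating gs psi -> separating gs (shift g psi).
Proof.
  intros HQ h. destruct (HQ (mul h g)) as [j [Hj Hne]]. exists j. split; auto.
  rewrite !shift_code by auto. rewrite <- mul_assoc. auto.
Qed.

Lemma separating_moved gs psi : separating gs psi -> exists g, shift g psi <> psi.
Proof.
  intros HQ. destruct (HQ e) as [j [Hj Hne]]. exists (mul (gs j) e). intros Heq. apply Hne.
  transitivity (shift (mul (gs j) e) psi (coset_index e * n + j)); [rewrite Heq; reflexivity|].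
  rewrite shift_code by auto. rewrite mul_unit_l. reflexivity.
Qed.

(* Both conditions only involve finitely many bits at a time, so the set of
   separating colourings is closed. *)
Lemma symbolic_flow_closed gs : cantor_closed (fun psi => coset_invariant psi /\ separating gs psi).
Proof.
  intros y H. split.
  - intros p. set (p' := coset_index (s (p / n)) * n + p mod n).
    destruct (H (S (Nat.max p p'))) as [y' [[HC _] Ha]].
    rewrite (Ha p), (Ha p') by lia. apply HC.
  - intros h.
    set (M := list_max (coset_index h :: map (fun j => coset_index (mul (gs j) h)) (seq 0 n))).
    destruct (H (S M * n)) as [y' [[_ HQ] Ha]].
    destruct (HQ h) as [j [Hj Hne]]. exists j. split; auto.
    assert (H1 : coset_index h <= M) by (apply le_list_max; left; auto).
    assert (H2 : coset_index (mul (gs j) h) <= M).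
    { apply le_list_max. right. apply in_map_iff. exists j. split; auto. apply in_seq. lia. }
    rewrite (Ha (coset_index h * n + j)), (Ha (coset_index (mul (gs j) h) * n + j)) by nia. auto.
Qed.

(* Bits below N * n of shift g psi only read the cosets V (s q) g with q < N,
   which are unchanged when g moves inside the open set where all these
   cosets stay put. *)
Lemma shift_continuous : cantor_action_continuous opG shift.
Proof.
  destruct V_open_subgroup as [Vopen _].
  intros g y N.
  exists (fun g' => forall q, In q (seq 0 N) -> V (mul (mul (s q) g') (inv (mul (s q) g)))).
  exists (S (list_max (map (fun q => coset_index (mul (s q) g)) (seq 0 N))) * n).
  split; [|split].
  - apply open_finite_inter; [apply HG|]. intros q _.
    apply (left_translate_open (s q) (fun x => V (mul x (inv (mul (s q) g))))).
    apply right_translate_open; auto.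
  - intros q _. rewrite mul_inv_r. apply V_open_subgroup.
  - intros g' y' Pg' Ha p Hp. unfold shift.
    assert (Hq : In (p / n) (seq 0 N)).
    { apply in_seq. pose proof (Nat.Div0.div_le_upper_bound p n p ltac:(nia)). lia. }
    rewrite (coset_index_eq (mul (s (p / n)) g') (mul (s (p / n)) g) (Pg' _ Hq)).
    apply Ha.
    assert (coset_index (mul (s (p / n)) g) <= list_max (map (fun q => coset_index (mul (s q) g)) (seq 0 N))).
    { apply le_list_max. apply in_map_iff. exists (p / n). auto. }
    pose proof (Nat.mod_upper_bound p n ltac:(lia)). nia.
Qed.

Lemma cantor_action_of_separating_colouring gs psi0 :
  coset_invariant psi0 -> separating gs psi0 ->
  exists a, continuous_action mul e opG cantor_open a /\ ~ has_fixed_point a.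
Proof.
  intros HC HQ.
  apply (cantor_action_from_closed_subflow (fun psi => coset_invariant psi /\ separating gs psi)
           G mul e opG shift).
  - apply symbolic_flow_closed.
  - exists psi0; auto.
  - intros g y [_ HQy]. split; [apply shift_coset_invariant | apply shift_separating; auto].
  - intros y [HCy _]. apply shift_unit; auto.
  - intros g h y _. apply shift_mul.
  - apply shift_continuous.
  - intros y [_ HQy]. apply (separating_moved gs); auto.
Qed.

End SymbolicFlow.

End TopologicalGroup.

Section FixedPointFreeFlow.

Variables (G : Type) (mul : G -> G -> G) (inv : G -> G) (e : G) (opG : (G -> Prop) -> Prop).
Hypothesis HG : is_topological_group mul inv e opG.
Variable s : nat -> G.
Hypothesis s_dense : forall U, opG U -> (exists x, U x) -> exists m, U (s m).
Hypothesis small_subgroups :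
  forall U, opG U -> U e -> exists H, open_subgroup mul inv e opG H /\ (forall x, H x -> U x).

Lemma dense_meets_cosets V : open_subgroup mul inv e opG V -> forall h, exists m, V (mul (s m) (inv h)).
Proof.
  intros HV h. apply (s_dense (fun x => V (mul x (inv h)))).
  - apply (right_translate_open G mul inv e opG HG). apply HV.
  - exists h. rewrite (mul_inv_r G mul inv e opG HG). apply HV.
Qed.

Variables (X : Type) (opX : (X -> Prop) -> Prop) (a : G -> X -> X).
Hypothesis X_topology : is_topology opX.
Hypothesis X_compact : Defs.compact opX.
Hypothesis X_hausdorff : hausdorff opX.
Hypothesis a_action : continuous_action mul e opG opX a.
Hypothesis a_moves : forall x, exists g, a g x <> x.

Record patch := {
  patch_g : G; patch_U : X -> Prop; patch_O : X -> Prop; patch_H : G -> Prop;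
  patch_O_open : opX patch_O;
  patch_H_open_subgroup : open_subgroup mul inv e opG patch_H;
  patch_absorbs : forall v z, patch_H v -> patch_O z -> patch_U (a v z);
  patch_separates : forall z, patch_U z -> patch_U (a patch_g z) -> False }.

(* Every point lies in a patch: separate x from g x by disjoint opens U1, W1;
   continuity at (g, x) and at (e, x) and non-archimedeanity give O and H. *)
Lemma patch_around x : exists P : patch, patch_O P x.
Proof.
  destruct a_action as [Ha_e [_ Ha_c]]. destruct (a_moves x) as [g Hgx].
  destruct (X_hausdorff x (a g x)) as [U1 [W1 [HU1 [HW1 [U1x [W1g Hdis]]]]]]; auto.
  destruct (Ha_c W1 HW1 g x W1g) as [P1 [O1 [HP1 [HO1 [P1g [O1x H1]]]]]].
  set (U := fun z => U1 z /\ O1 z).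
  assert (HU : opX U) by (apply X_topology; auto).
  assert (HUx : U (a e x)) by (rewrite Ha_e; split; auto).
  destruct (Ha_c U HU e x HUx) as [P2 [O2 [HP2 [HO2 [P2e [O2x H2]]]]]].
  destruct (small_subgroups P2 HP2 P2e) as [H [HH HHP]].
  unshelve eexists (Build_patch g U O2 H HO2 HH _ _); simpl; auto.
  intros z [U1z O1z] [U1gz _]. apply (Hdis (a g z)); auto.
Qed.

Lemma finite_patch_cover (x0 : X) : exists (n : nat) (P : nat -> patch) (V : G -> Prop),
  0 < n /\ open_subgroup mul inv e opG V /\ (forall x, exists j, j < n /\ patch_O (P j) x) /\
  (forall j v, j < n -> V v -> patch_H (P j) v).
Proof.
  destruct (X_compact patch patch_O patch_O_open patch_around) as [l Hl].
  destruct (patch_around x0) as [P0 _].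
  set (n := length l).
  set (V := fun v => forall j, In j (seq 0 n) -> patch_H (nth j l P0) v).
  exists n, (fun j => nth j l P0), V.
  assert (Hsub : forall j, open_subgroup mul inv e opG (patch_H (nth j l P0)))
    by (intros j; apply patch_H_open_subgroup).
  split; [|split; [|split]].
  - destruct (Hl x0) as [i [Hi _]]. unfold n. destruct l; simpl in *; [contradiction|lia].
  - split; [|split; [|split]].
    + apply open_finite_inter; [apply HG|]. intros j _. apply Hsub.
    + intros j _. apply Hsub.
    + intros v w Hv Hw j Hj. apply (Hsub j); auto.
    + intros v Hv j Hj. apply (Hsub j); auto.
  - intros x. destruct (Hl x) as [i [Hi Ox]]. destruct (In_nth l i P0 Hi) as [j [Hj Hnth]].
    exists j. split; auto. rewrite Hnth. auto.
  - intros j v Hj Hv. apply Hv. apply in_seq. lia.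
Qed.

(* The colouring psi(V h, j) = [h x0 in O_j] (h the chosen representative of V h)
   is separating, with g_j the moving element of the j-th patch. *)
Lemma fixed_point_free_cantor_action (x0 : X) :
  exists b, continuous_action mul e opG cantor_open b /\ ~ has_fixed_point b.
Proof.
  destruct (finite_patch_cover x0) as (n & P & V & Hn & HV & Hcover & HPV).
  pose proof (dense_meets_cosets V HV) as Hmeets.
  set (idx := coset_index G mul inv V s).
  assert (Hrepr : forall h, idx (s (idx h)) = idx h)
    by (intros h; apply (coset_index_repr G mul inv e opG HG V s HV Hmeets)).
  (* If the representative k of V m sends x0 into O_j, then m sends x0 into U_j:
     m = v k with v in V, and V O_j lies inside U_j. *)
  assert (Hrep_in_U : forall j m, j < n -> patch_O (P j) (a (s (idx m)) x0) -> patch_U (P j) (a m x0)).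
  { intros j m Hj HO. set (k := s (idx m)).
    assert (Hk : V (mul k (inv m))) by apply (coset_index_spec G mul inv V s Hmeets).
    rewrite <- (right_quotient_decomposition G mul inv e opG HG k m), (proj1 (proj2 a_action)).
    apply patch_absorbs; auto. apply HPV; auto. apply HV; auto. }
  set (psi0 := fun p => truth (patch_O (P (p mod n)) (a (s (idx (s (p / n)))) x0))).
  apply (cantor_action_of_separating_colouring G mul inv e opG HG V s HV Hmeets n Hn
           (fun j => patch_g (P j)) psi0).
  - intros p. unfold psi0. fold idx.
    rewrite pair_code_div, pair_code_mod, Hrepr by (apply Nat.mod_upper_bound; lia). reflexivity.
  - intros h. fold idx. destruct (Hcover (a (s (idx h)) x0)) as [j [Hj Oj]].
    exists j. split; auto. intros Heq. unfold psi0 in Heq.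
    rewrite !pair_code_div, !pair_code_mod, !Hrepr in Heq by auto.
    apply (patch_separates (P j) (a h x0)); auto.
    rewrite <- (proj1 (proj2 a_action)). apply Hrep_in_U; auto.
    apply truth_true. rewrite <- Heq. apply truth_true. auto.
Qed.

End FixedPointFreeFlow.

Lemma moved_of_no_fixed_point {G X : Type} (a : G -> X -> X) :
  ~ has_fixed_point a -> forall x, exists g, a g x <> x.
Proof.
  intros Hnf x. apply NNPP. intros H. apply Hnf. exists x. intros g.
  apply NNPP. intros Hg. apply H. eauto.
Qed.

Theorem theorem2p3p6 (G : Type) (mul : G -> G -> G) (inv : G -> G) (e : G)
  (opG : (G -> Prop) -> Prop)
  (HG : is_topological_group mul inv e opG)
  (Hpol : polish opG)
  (Hna : non_archimedean mul inv e opG) :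
  extremely_amenable mul e opG <->
  (forall a : G -> cantor -> cantor,
      continuous_action mul e opG cantor_open a -> has_fixed_point a).
Proof.
  split.
  - intros HEA a Ha. apply (HEA cantor cantor_open); auto using cantor_topology, cantor_compact, cantor_hausdorff.
    exists (fun _ => false). exact I.
  - intros Hcantor X opX HtX HcX HhX [x0 _] a Ha. apply NNPP. intros Hnf.
    destruct Hpol as [[s Hs] _]. destruct Hna as [_ Hsmall].
    destruct (fixed_point_free_cantor_action G mul inv e opG HG s Hs Hsmall X opX a HtX HcX HhX Ha
                (moved_of_no_fixed_point a Hnf) x0) as [b [Hb Hnb]].
    exact (Hnb (Hcantor b Hb)).
Qed.
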